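(* Let $t,k,\ell$ be positive integers with $t<k$, let $\mathbb{F}$ be a finite field, and let $b$ be an integer with $b>\ell/k$. There is a black-box transformation with parameters $(t,k,k_0=\binom{k}{t},\ell,\mathbb{F})$ whose associated LMSSS $\mathcal{L}$ has every party's share in $\mathbb{F}^b$ (hence information rate $\ell/(kb)$) if and only if there is an $\mathbb{F}$-linear code $C\subseteq(\mathbb{F}^b)^k$ with rate at least $\ell/(kb)$ and distance at least $t+1$. Moreover, in the ''if'' direction the transformation can be chosen with $c_j=\ell\binom{k-1}{t}$ for every $j\in[k]$.
   Context: A $k$-party $\ell$-LMSSS over $\mathbb{F}$: an $\mathbb{F}$-linear map $\mathsf{Share}:\mathbb{F}^\ell\times\mathbb{F}^e\to\mathbb{F}^{b_1}\times\dots\times\mathbb{F}^{b_k}$ together with an access structure $\Gamma$ (sets that can linearly recover the secret from their shares) and adversary structure $\mathcal{T}$ (sets whose shares, for uniform randomness, have a distribution independent of the secret); information rate $\ell/\sum_jb_j$. Black-box transformation with parameters $(t,k,k_0,\ell,\mathbb{F})$: a $k$-party $\ell$-LMSSS $\mathcal{L}=(\mathsf{Share}_\mathcal{L},\mathsf{Rec}_\mathcal{L})$ over $\mathbb{F}$ with parameters $(e,b_1,\dots,b_k)$ (all $k$ parties together qualified), replication functions $\psi_i:[k_0]\to2^{[k]}$ ($i\in[\ell]$) and conversion functions $\varphi_j:\mathbb{F}^{c_j}\to\mathbb{F}^{b_j}$, $c_j=\sum_{i=1}^\ell|\{v\in[k_0]:j\in\psi_i(v)\}|$, such that for every $(y_i^{(v)})_{i\in[\ell],v\in[k_0]}$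 there is $\mathbf{r}$ with $(\varphi_j(\mathbf{Y}(j)))_{j}=\mathsf{Share}_\mathcal{L}((\sum_vy_1^{(v)},\dots,\sum_vy_\ell^{(v)}),\mathbf{r})$ where $\mathbf{Y}(j)=(y_i^{(v)})_{i,v:\,j\in\psi_i(v)}$, and for every $T\subseteq[k]$ with $|T|\le t$ and $i\in[\ell]$, $|\bigcup_{j\in T}\{v:j\in\psi_i(v)\}|\le k_0-1$. Its rate is the information rate of $\mathcal{L}$. $\mathbb{F}$-linear code $C\subseteq(\mathbb{F}^b)^k$: $\mathbb{F}$-subspace; rate $\dim_{\mathbb{F}}C/(bk)$; distance = minimum number of coordinates in $[k]$ where two distinct codewords differ. *)

From HB Require Import structures.
From mathcomp Require Import all_boot all_order all_algebra.
Set Implicit Arguments. Unset Strict Implicit. Unset Printing Implicit Defensive.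
Import Order.TTheory GRing.Theory Num.Theory.
Local Open Scope ring_scope.

(* An l-LMSSS for k parties over F with randomness length e and share sizes
   bs j : the F-linear map Share : F^l x F^e -> prod_j F^(bs j) is given by
   matrices M j, with Share(s, r)_j = (s | r) *m M j. *)
Definition share (F : fieldType) (l e k : nat) (bs : 'I_k -> nat)
  (M : forall j : 'I_k, 'M[F]_(l + e, bs j)) (s : 'rV[F]_l) (r : 'rV[F]_e)
  (j : 'I_k) : 'rV[F]_(bs j) := row_mx s r *m M j.

Definition lin_recovers (F : fieldType) (l e k : nat) (bs : 'I_k -> nat)
  (M : forall j : 'I_k, 'M[F]_(l + e, bs j)) (A : {set 'I_k}) : Prop :=
  exists R : forall j : 'I_k, 'M[F]_(bs j, l),
    forall (s : 'rV[F]_l) (r : 'rV[F]_e),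
      \sum_(j in A) (share M s r j *m R j) = s.

(* Index set of Y(j): pairs (i, v) with j \in psi_i(v); c_j is its size. *)
Definition repl_set (l k0 k : nat) (psi : 'I_l -> 'I_k0 -> {set 'I_k})
  (j : 'I_k) : {set 'I_l * 'I_k0} := [set p | j \in psi p.1 p.2].

(* Y(j) as a vector of F^(c_j) (entries listed in the enumeration order of
   the index set). *)
Definition Yof (F : fieldType) (l k0 k : nat) (psi : 'I_l -> 'I_k0 -> {set 'I_k})
  (y : 'I_l -> 'I_k0 -> F) (j : 'I_k) : 'rV[F]_#|repl_set psi j| :=
  \row_(a < #|repl_set psi j|)
     y (@enum_val _ (mem (repl_set psi j)) a).1 (@enum_val _ (mem (repl_set psi j)) a).2.

Definition is_BBT (F : finFieldType) (t k k0 l e : nat) (bs : 'I_k -> nat)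
  (M : forall j : 'I_k, 'M[F]_(l + e, bs j))
  (psi : 'I_l -> 'I_k0 -> {set 'I_k})
  (phi : forall j : 'I_k, 'rV[F]_#|repl_set psi j| -> 'rV[F]_(bs j)) : Prop :=
  [/\ lin_recovers M [set: 'I_k],
      (forall y : 'I_l -> 'I_k0 -> F, exists r : 'rV[F]_e,
         forall j : 'I_k,
           phi j (Yof psi y j) = share M (\row_i \sum_(v < k0) y i v) r j) &
      (forall T : {set 'I_k}, #|T| <= t ->
         forall i : 'I_l, #|[set v | [exists j in T, j \in psi i v]]| <= k0 - 1)%N].

Definition BBT_exists (F : finFieldType) (t k k0 l b : nat) : Prop :=
  exists (e : nat) (M : forall j : 'I_k, 'M[F]_(l + e, b))
         (psi : 'I_l -> 'I_k0 -> {set 'I_k})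
         (phi : forall j : 'I_k, 'rV[F]_#|repl_set psi j| -> 'rV[F]_b),
    is_BBT t (bs := fun _ => b) M phi.

Definition BBT_exists_c (F : finFieldType) (t k k0 l b c : nat) : Prop :=
  exists (e : nat) (M : forall j : 'I_k, 'M[F]_(l + e, b))
         (psi : 'I_l -> 'I_k0 -> {set 'I_k})
         (phi : forall j : 'I_k, 'rV[F]_#|repl_set psi j| -> 'rV[F]_b),
    is_BBT t (bs := fun _ => b) M phi /\ (forall j, #|repl_set psi j| = c)%N.

(* F-linear codes C in (F^b)^k: codewords are k x b matrices, row j being
   coordinate j. *)
Definition code_rate (F : fieldType) (k b : nat) (C : {vspace 'M[F]_(k, b)}) : rat :=
  (\dim C)%:R / (b * k)%:R.

Definition code_dist_ge (F : fieldType) (k b : nat) (C : {vspace 'M[F]_(k, b)})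
  (d : nat) : Prop :=
  forall x y : 'M[F]_(k, b), x \in C -> y \in C -> x != y ->
    (d <= #|[set j : 'I_k | row j x != row j y]|)%N.

From HB Require Import structures.
From mathcomp Require Import all_boot all_order all_algebra zify.
Set Implicit Arguments. Unset Strict Implicit. Unset Printing Implicit Defensive.
Import Order.TTheory GRing.Theory Num.Theory.
Local Open Scope ring_scope.

(* A transformation gives a code: pairing the reconstruction matrices R_j with
   u gives the word (u R_j^T)_j, and since any t parties can be handed zero
   shares for every secret (put the secret in copies none of them holds), a
   word vanishing outside t coordinates comes from u = 0.  These words thus
   form a code of dimension l and distance t + 1.
   Conversely, l independent codewords g_i define the secret map
   x |-> (<x, g_i>)_i on share matrices x; by duality with the distance it
   stays onto when restricted to shares vanishing on any t-set T.  The
   transformation has one copy per t-set T, held by the parties outside T,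
   each of which outputs the sum of its rows of preimages vanishing on T. *)

(** * Codes from transformations *)

Lemma shareB (F : fieldType) (l e k b : nat) (M : forall j : 'I_k, 'M[F]_(l + e, b))
    s1 s2 r1 r2 j :
  share M s1 r1 j - share M s2 r2 j = share M (s1 - s2) (r1 - r2) j.
Proof. by rewrite /share -mulmxBl opp_row_mx add_row_mx. Qed.

Lemma BBT_zero_shares (F : finFieldType) (t k k0 l e b : nat)
    (M : forall j : 'I_k, 'M[F]_(l + e, b)) (psi : 'I_l -> 'I_k0 -> {set 'I_k})
    (phi : forall j : 'I_k, 'rV[F]_#|repl_set psi j| -> 'rV[F]_b) :
    (0 < k0)%N -> is_BBT t M phi ->
  forall T : {set 'I_k}, (#|T| <= t)%N -> forall s : 'rV[F]_l,
  exists r : 'rV[F]_e, forall j, j \in T -> share M s r j = 0.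
Proof.
move=> k0_gt0 [_ consistent replication] T leTt s.
have unseen i : exists v, [forall j in T, j \notin psi i v].
  pose S := [set v | [exists j in T, j \in psi i v]].
  have : (0 < #|~: S|)%N.
    by have := cardsC S; have := replication T leTt i; rewrite -/S card_ord; lia.
  case/card_gt0P=> v; rewrite !inE negb_exists => /forallP Tv.
  by exists v; apply/forall_inP => j jT; have := Tv j; rewrite jT.
pose v_ i := xchoose (unseen i).
(* Put the whole secret in one copy per coordinate that no party of T holds,
   so that T sees exactly what it sees when sharing 0. *)
pose y i v := if v == v_ i then s 0 i else 0.
have [r1 share_y] := consistent y.
have [r0 share_0] := consistent (fun _ _ => 0).
exists (r1 - r0) => j jT.
have sum_y : \row_i \sum_(v < k0) y i v = s.
  apply/rowP => i; rewrite mxE (bigD1 (v_ i)) //= /y eqxx big1 ?addr0 //.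
  by move=> v /negbTE ->.
have sum_0 : \row_i \sum_(v < k0) (0 : F) = 0 :> 'rV_l.
  by apply/rowP => i; rewrite !mxE big1.
have Yof_y : Yof psi y j = Yof psi (fun _ _ => 0) j.
  apply/rowP => a; rewrite !mxE /y; case: eqP => // v_a.
  have := enum_valP a; rewrite inE => j_a.
  have /forall_inP/(_ j jT) := xchooseP (unseen (enum_val a).1).
  by rewrite -/(v_ (enum_val a).1) -v_a j_a.
rewrite -[s]subr0 -{1}sum_y -sum_0 -shareB.
by rewrite -share_y -share_0 Yof_y subrr.
Qed.

Section RecoveryCode.

Variables (F : fieldType) (t l e k b : nat).
Variables (M : forall j : 'I_k, 'M[F]_(l + e, b)) (R : forall j : 'I_k, 'M[F]_(b, l)).
Hypothesis recovery : forall s r, \sum_(j in [set: 'I_k]) share M s r j *m R j = s.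
Hypothesis zero_shares : forall T : {set 'I_k}, (#|T| <= t)%N ->
  forall s, exists r, forall j, j \in T -> share M s r j = 0.

Definition recovery_word (u : 'rV[F]_l) : 'M[F]_(k, b) := \matrix_j (u *m (R j)^T).

Fact recovery_word_is_semilinear : semilinear recovery_word.
Proof.
by split=> [a u|u v]; apply/row_matrixP => j;
  rewrite ?(rowK, linearZ, linearD) /= ?rowK ?(scalemxAl, mulmxDl).
Qed.

HB.instance Definition _ := GRing.isSemilinear.Build F 'rV[F]_l 'M[F]_(k, b) _
  recovery_word recovery_word_is_semilinear.

(* Pairing the recovery identity for a secret with zero shares on T against u
   kills every summand, so the coordinate of u paired with the secret is 0. *)
Lemma recovery_word_eq0 (T : {set 'I_k}) u : (#|T| <= t)%N ->
  (forall j, j \notin T -> row j (recovery_word u) = 0) -> u = 0.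
Proof.
move=> leTt u_T; apply/rowP => i; rewrite mxE.
have [r r_T] := zero_shares leTt (delta_mx 0 i).
have := congr1 (mulmx^~ u^T) (recovery (delta_mx 0 i) r).
rewrite -rowE mulmx_suml big1 => [/matrixP/(_ 0 0)|j _]; first by rewrite !mxE.
have [jT|jNT] := boolP (j \in T); first by rewrite r_T // !mul0mx.
rewrite -mulmxA.
have -> : R j *m u^T = (row j (recovery_word u))^T by rewrite rowK trmx_mul trmxK.
by rewrite u_T // trmx0 mulmx0.
Qed.

Lemma recovery_code : exists C : {vspace 'M[F]_(k, b)},
  \dim C = l /\ code_dist_ge C t.+1.
Proof.
have rw_inj : injective recovery_word.
  move=> u v /eqP; rewrite -subr_eq0 -linearB => /eqP uv0; apply/eqP.
  rewrite -subr_eq0; apply/eqP/(@recovery_word_eq0 set0); first by rewrite cards0.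
  by move=> j _; rewrite uv0 row0.
exists (limg (linfun recovery_word)); split.
  rewrite limg_dim_eq ?dimvf; first exact: mul1n.
  by rewrite capfv; apply/eqP/lker0P => u v; rewrite !lfunE; apply: rw_inj.
move=> _ _ /memv_imgP [u _ ->] /memv_imgP [v _ ->]; rewrite !lfunE /= => neq_uv.
rewrite leqNgt; apply: contra neq_uv => small; apply/eqP; congr recovery_word.
apply/eqP; rewrite -subr_eq0; apply/eqP.
apply: (recovery_word_eq0 (ltnSE small)) => j; rewrite inE negbK linearB /= => /eqP eq_j.
by rewrite linearB /= eq_j subrr.
Qed.

End RecoveryCode.

Lemma code_of_BBT (F : finFieldType) (t k k0 l e b : nat)
    (M : forall j : 'I_k, 'M[F]_(l + e, b)) (psi : 'I_l -> 'I_k0 -> {set 'I_k})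
    (phi : forall j : 'I_k, 'rV[F]_#|repl_set psi j| -> 'rV[F]_b) :
    (0 < k0)%N -> is_BBT t M phi ->
  exists C : {vspace 'M[F]_(k, b)}, \dim C = l /\ code_dist_ge C t.+1.
Proof.
move=> k0_gt0 BBT; have [[R R_recovers] _ _] := BBT.
exact: recovery_code R_recovers (BBT_zero_shares k0_gt0 BBT).
Qed.

(** * Transformations from codes *)

Section RowMask.

Variables (F : fieldType) (k b : nat).

Definition row_mask (T : {set 'I_k}) : 'M[F]_k := diag_mx (\row_j (j \notin T)%:R).

Lemma row_row_mask_mul (T : {set 'I_k}) (x : 'M[F]_(k, b)) j :
  row j (row_mask T *m x) = if j \in T then 0 else row j x.
Proof.
rewrite row_mul row_diag_mx -scalemxAl -rowE mxE.
by case: (j \in T); rewrite ?scale0r ?scale1r.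
Qed.

Lemma tr_lin_mulmx_row_mask (T : {set 'I_k}) :
  (lin_mulmx (row_mask T))^T = lin_mulmx (row_mask T) :> 'M[F]_(k * b).
Proof.
apply/matrixP => a a'; case/mxvec_indexP: a => j c; case/mxvec_indexP: a' => j' c'.
rewrite !mxE /= !vec_mx_delta !mxvecE !mul_diag_mx !mxE.
by case: eqVneq => [->|_]; rewrite ?[c' == c]eq_sym ?mulr0.
Qed.

End RowMask.

Section CodeSecret.

Variables (F : fieldType) (t k b l : nat) (C : {vspace 'M[F]_(k, b)}).
Hypotheses (C_dim : (l <= \dim C)%N) (C_dist : code_dist_ge C t.+1).

Lemma codeword_support_eq0 (T : {set 'I_k}) w : w \in C -> (#|T| <= t)%N ->
  (forall j, j \notin T -> row j w = 0) -> w = 0.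
Proof.
move=> wC leTt w_T; apply/eqP; apply: contraTT leTt => /(C_dist wC (mem0v C)) big.
rewrite -ltnNge (leq_trans big) // subset_leq_card //.
by apply/subsetP => j; rewrite inE row0; apply: contraR => /w_T ->.
Qed.

Lemma code_generator : exists2 G : 'M[F]_(l, k * b),
  row_free G & forall u, vec_mx (u *m G) \in C.
Proof.
pose X := vbasis C; pose G := \matrix_(i < l) mxvec X`_i.
have GE u : vec_mx (u *m G) = \sum_(i < l) u 0 i *: X`_i.
  rewrite mulmx_sum_row linear_sum.
  by apply: eq_bigr => i _; rewrite rowK linearZ /= mxvecK.
exists G; last first.
  move=> u; rewrite GE memv_suml // => i _; apply/memvZ/vbasis_mem/mem_nth.
  by rewrite size_tuple (leq_trans _ C_dim).
apply: inj_row_free => u /(congr1 vec_mx); rewrite GE linear0 => u0.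
pose c (n : nat) := oapp (u 0) 0 (insub n : option 'I_l).
have c0 : \sum_(i < \dim C) c i *: X`_i = 0.
  rewrite -[RHS]u0; transitivity (\sum_(i < l) c i *: X`_i); last first.
    by apply: eq_bigr => i _; rewrite /c valK.
  rewrite (big_ord_widen _ (fun i => c i *: X`_i) C_dim) [RHS]big_mkcond /=.
  by apply: eq_bigr => i _; case: ifP => // /negbT i_ge_l; rewrite /c insubN // scale0r.
apply/rowP => i; have := freeP (basis_free (vbasisP C)) _ c0 (widen_ord C_dim i).
by rewrite /c /= valK mxE.
Qed.

(* The secret of shares x is <x, g_i>_i for the generator rows g_i; masking
   the rows in T is self-adjoint for this pairing, so surjectivity of the
   masked secret map is dual to the injectivity of masking on C. *)
Lemma code_secret_private (G : 'M[F]_(l, k * b)) : row_free G ->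
    (forall u, vec_mx (u *m G) \in C) ->
  forall T : {set 'I_k}, (#|T| <= t)%N -> forall s : 'rV[F]_l,
  exists x : 'M[F]_(k, b), (forall j, j \in T -> row j x = 0) /\ mxvec x *m G^T = s.
Proof.
move=> G_free G_C T leTt s; pose L : 'M_(k * b) := lin_mulmx (row_mask F T).
have /row_fullP [B B_inv] : row_full (L *m G^T).
  rewrite /row_full -mxrank_tr trmx_mul trmxK tr_lin_mulmx_row_mask.
  apply: inj_row_free => u; rewrite mulmxA mul_rV_lin /= => /eqP.
  rewrite mxvec_eq0 => /eqP masked.
  have : vec_mx (u *m G) = 0.
    apply: (codeword_support_eq0 (G_C u) leTt) => j jNT.
    by have := congr1 (row j) masked; rewrite row_row_mask_mul (negbTE jNT) row0.
  by move/eqP; rewrite vec_mx_eq0 mulmx_free_eq0 // => /eqP.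
exists (row_mask F T *m vec_mx (s *m B)); split.
  by move=> j jT; rewrite row_row_mask_mul jT.
by rewrite -mul_vec_lin -/L vec_mxK -!mulmxA B_inv mulmx1.
Qed.

End CodeSecret.

Lemma exists_superset_card (I : finType) (T : {set I}) n :
  (#|T| <= n <= #|I|)%N -> exists2 A : {set I}, T \subset A & #|A| = n.
Proof.
case/andP => leTn lenI.
have : (0 < #|[set B : {set I} | B \subset ~: T & #|B| == n - #|T|]|)%N.
  by rewrite cards_draws bin_gt0; have := cardsC T; lia.
case/card_gt0P => B; rewrite inE => /andP [sub_B /eqP card_B].
exists (T :|: B); first exact: subsetUl.
rewrite cardsU card_B; have /eqP -> : #|T :&: B| == 0%N.
  by rewrite cards_eq0 setI_eq0 disjoint_sym -[T]setCK -subsets_disjoint.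
by rewrite subn0 subnKC.
Qed.

Section Draws.

Variables (k t : nat).

Lemma card_draws_ord : #|[set A : {set 'I_k} | #|A| == t]| = 'C(k, t).
Proof. by rewrite card_draws card_ord. Qed.

Definition draw (v : 'I_'C(k, t)) : {set 'I_k} :=
  enum_val (cast_ord (esym card_draws_ord) v).

Lemma card_draw v : #|draw v| = t.
Proof. by have := enum_valP (cast_ord (esym card_draws_ord) v); rewrite inE => /eqP. Qed.

Lemma draw_inj : injective draw.
Proof. by move=> v1 v2 /enum_val_inj /cast_ord_inj. Qed.

Lemma draw_onto (A : {set 'I_k}) : #|A| = t -> exists v, draw v = A.
Proof.
move=> card_A; have A_draw : A \in [set A : {set 'I_k} | #|A| == t] by rewrite inE card_A.
exists (cast_ord card_draws_ord (enum_rank_in A_draw A)).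
by rewrite /draw cast_ordK enum_rankK_in.
Qed.

End Draws.

Definition Yentry (F : fieldType) (l k0 k : nat) (psi : 'I_l -> 'I_k0 -> {set 'I_k})
    (j : 'I_k) (Y : 'rV[F]_#|repl_set psi j|) (i : 'I_l) (v : 'I_k0) : F :=
  \sum_(a | enum_val a == (i, v)) Y 0 a.

Lemma Yentry_Yof (F : fieldType) (l k0 k : nat) (psi : 'I_l -> 'I_k0 -> {set 'I_k})
    (y : 'I_l -> 'I_k0 -> F) j i v :
  (i, v) \in repl_set psi j -> Yentry (Yof psi y j) i v = y i v.
Proof.
move=> iv_j; pose a0 := enum_rank_in iv_j (i, v).
rewrite /Yentry (big_pred1 a0) => [|a].
  by rewrite mxE enum_rankK_in.
apply/eqP/eqP => [val_a|->]; last exact: enum_rankK_in.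
by rewrite -(enum_valK_in iv_j a) val_a.
Qed.

Lemma mxvec_mul_rows (F : fieldType) (k b l : nat)
    (x : 'M[F]_(k, b)) (A : 'M[F]_(k * b, l)) :
  mxvec x *m A = \sum_(j in [set: 'I_k]) row j x *m \matrix_(c, i) A (mxvec_index j c) i.
Proof.
apply/rowP => i; rewrite summxE (eq_bigl xpredT) => [|j]; last by rewrite inE.
transitivity (\sum_j \sum_c x j c * A (mxvec_index j c) i).
  rewrite mxE (reindex _ (curry_mxvec_bij _ _)) /= pair_bigA.
  by apply: eq_bigr => -[j c] _; rewrite mxvecE.
by apply: eq_bigr => j _; rewrite !mxE; apply: eq_bigr => c _; rewrite !mxE.
Qed.

Section SchemeOfPrivateRecovery.

Variables (F : finFieldType) (t k l b : nat) (Rec : 'M[F]_(k * b, l)).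
Hypotheses (le_tk : (t <= k)%N) (Rec_full : row_full Rec).
Hypothesis Rec_private : forall T : {set 'I_k}, (#|T| <= t)%N -> forall s : 'rV[F]_l,
  exists x : 'M[F]_(k, b), (forall j, j \in T -> row j x = 0) /\ mxvec x *m Rec = s.

Lemma piece_exists (v : 'I_'C(k, t)) (s : 'rV[F]_l) : exists x : 'M[F]_(k, b),
  [forall j in draw v, row j x == 0] && (mxvec x *m Rec == s).
Proof.
have [x [x_v x_s]] := Rec_private (eq_leq (card_draw v)) s.
by exists x; rewrite x_s eqxx andbT; apply/forall_inP => j /x_v ->.
Qed.

Definition piece (v : 'I_'C(k, t)) (s : 'rV[F]_l) : 'M[F]_(k, b) :=
  xchoose (piece_exists v s).

Lemma pieceP v s :
  (forall j, j \in draw v -> row j (piece v s) = 0) /\ mxvec (piece v s) *m Rec = s.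
Proof.
have /andP [/forall_inP x_v /eqP x_s] := xchooseP (piece_exists v s).
by split=> // j /x_v /eqP.
Qed.

Definition scheme_psi (i : 'I_l) (v : 'I_'C(k, t)) : {set 'I_k} := ~: draw v.

Definition scheme_phi (j : 'I_k) (Y : 'rV[F]_#|repl_set scheme_psi j|) : 'rV[F]_b :=
  \sum_(v | j \notin draw v) row j (piece v (\row_i Yentry Y i v)).

Lemma pinvmx_Rec : pinvmx Rec *m Rec = 1%:M.
Proof. by rewrite -[pinvmx Rec]mul1mx mulmxKpV // submx_full. Qed.

(* The shares of (s, r) are the rows of r + (s - r Rec) P, P a left inverse
   of Rec: this has secret s, and is r itself when r already has secret s. *)
Definition scheme_mx : 'M[F]_(l + k * b, k * b) :=
  col_mx (pinvmx Rec) (1%:M - Rec *m pinvmx Rec).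

Definition scheme_M (j : 'I_k) : 'M[F]_(l + k * b, b) :=
  \matrix_(a, c) scheme_mx a (mxvec_index j c).

Lemma share_scheme s r j :
  share scheme_M s r j = row j (vec_mx (r + (s - r *m Rec) *m pinvmx Rec)).
Proof.
have -> : r + (s - r *m Rec) *m pinvmx Rec = row_mx s r *m scheme_mx.
  by rewrite mul_row_col mulmxBr mulmx1 (mulmxA r) (mulmxBl s) addrCA.
by apply/rowP => c; rewrite !mxE; apply: eq_bigr => a _; rewrite !mxE.
Qed.

Lemma scheme_recovers : lin_recovers scheme_M [set: 'I_k].
Proof.
exists (fun j => \matrix_(c, i) Rec (mxvec_index j c) i) => s r.
under eq_bigr do rewrite share_scheme.
by rewrite -mxvec_mul_rows vec_mxK mulmxDl -mulmxA pinvmx_Rec mulmx1 addrC subrK.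
Qed.

Lemma scheme_consistent (y : 'I_l -> 'I_'C(k, t) -> F) : exists r : 'rV[F]_(k * b),
  forall j, scheme_phi (Yof scheme_psi y j) = share scheme_M (\row_i \sum_v y i v) r j.
Proof.
pose X := \sum_v piece v (\row_i y i v).
have X_secret : mxvec X *m Rec = \row_i \sum_v y i v.
  rewrite linear_sum mulmx_suml; under eq_bigr do rewrite (pieceP _ _).2.
  by apply/rowP => i; rewrite summxE !mxE; apply: eq_bigr => v _; rewrite mxE.
exists (mxvec X) => j.
rewrite share_scheme X_secret subrr mul0mx addr0 mxvecK /X /scheme_phi.
rewrite rowE mulmx_sumr big_mkcond /=; apply: eq_bigr => v _; rewrite -rowE.
case: ifPn => [j_v|]; last by rewrite negbK => /(pieceP v _).1 ->.
congr (row j (piece v _)); apply/rowP => i; rewrite !mxE Yentry_Yof //.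
by rewrite inE /scheme_psi in_setC.
Qed.

Lemma scheme_replication (T : {set 'I_k}) : (#|T| <= t)%N -> forall i,
  (#|[set v | [exists j in T, j \in scheme_psi i v]]| <= 'C(k, t) - 1)%N.
Proof.
move=> leTt i; have [A sub_TA card_A] : exists2 A : {set 'I_k}, T \subset A & #|A| = t.
  by apply: exists_superset_card; rewrite leTt card_ord.
have [v0 v0_A] := draw_onto card_A.
rewrite -[X in (_ <= X - 1)%N]card_ord subn1 -(cardsC1 v0) subset_leq_card //.
apply/subsetP => v; rewrite !inE; apply: contraTneq => ->.
rewrite negb_exists; apply/forallP => j; rewrite /scheme_psi in_setC v0_A.
by case: (boolP (j \in T)) => //= /(subsetP sub_TA) ->.
Qed.

Lemma card_repl_scheme j : #|repl_set scheme_psi j| = (l * 'C(k.-1, t))%N.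
Proof.
have -> : repl_set scheme_psi j = setX [set: 'I_l] [set v | j \notin draw v].
  by apply/setP => -[i v]; rewrite !inE.
rewrite cardsX cardsT card_ord -(card_imset _ (@draw_inj k t)).
have -> : @draw k t @: [set v | j \notin draw v] =
          [set A : {set 'I_k} | A \subset [set~ j] & #|A| == t].
  apply/setP => A; rewrite inE subsets_disjoint setCK disjoint_sym disjoints1.
  apply/imsetP/andP => [[v] | [j_A /eqP /draw_onto [v v_A]]].
    by rewrite inE => j_v ->; rewrite card_draw.
  by exists v; rewrite // inE v_A.
by rewrite cards_draws cardsC1 card_ord.
Qed.

Lemma BBT_of_private_recovery : BBT_exists_c F t k 'C(k, t) l b (l * 'C(k.-1, t)).
Proof.
exists (k * b)%N, scheme_M, scheme_psi, scheme_phi; split; last exact: card_repl_scheme.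
split; [exact: scheme_recovers | exact: scheme_consistent | exact: scheme_replication].
Qed.

End SchemeOfPrivateRecovery.

Lemma code_rate_ge (F : fieldType) (k b l : nat) (C : {vspace 'M[F]_(k, b)}) :
  (0 < k * b)%N -> (l%:R / (k * b)%:R <= code_rate C) = (l <= \dim C)%N.
Proof.
by move=> kb_gt0; rewrite /code_rate mulnC ler_pM2r ?ler_nat // invr_gt0 ltr0n mulnC.
Qed.

Theorem mainTheorem12 (F : finFieldType) (t k l b : nat) :
  (0 < t)%N -> (0 < k)%N -> (0 < l)%N -> (t < k)%N ->
  (l%:R / k%:R < b%:R :> rat) ->
  (BBT_exists F t k 'C(k, t) l b <->
   exists C : {vspace 'M[F]_(k, b)},
     l%:R / (k * b)%:R <= code_rate C /\ code_dist_ge C t.+1)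
  /\
  ((exists C : {vspace 'M[F]_(k, b)},
      l%:R / (k * b)%:R <= code_rate C /\ code_dist_ge C t.+1) ->
   BBT_exists_c F t k 'C(k, t) l b (l * 'C(k.-1, t))).
Proof.
move=> _ k_gt0 _ lt_tk lb.
have kb_gt0 : (0 < k * b)%N.
  rewrite muln_gt0 k_gt0 -(ltr0n rat); apply: le_lt_trans lb.
  by rewrite divr_ge0 ?ler0n.
have BBT_of_code : (exists C : {vspace 'M[F]_(k, b)},
      l%:R / (k * b)%:R <= code_rate C /\ code_dist_ge C t.+1) ->
    BBT_exists_c F t k 'C(k, t) l b (l * 'C(k.-1, t)).
  case=> C []; rewrite code_rate_ge // => C_dim C_dist.
  have [G G_free G_C] := code_generator C_dim.
  apply: (BBT_of_private_recovery (Rec := G^T) (ltnW lt_tk)).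
    by rewrite /row_full mxrank_tr.
  exact: (code_secret_private C_dist G_free G_C).
split=> //; split=> [[e [M [psi [phi BBT]]]] | /BBT_of_code [e [M [psi [phi [BBT _]]]]]].
  have k0_gt0 : (0 < 'C(k, t))%N by rewrite bin_gt0 ltnW.
  have [C [C_dim C_dist]] := code_of_BBT k0_gt0 BBT.
  by exists C; rewrite code_rate_ge // C_dim.
by exists e, M, psi, phi.
Qed.
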